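(* Let $n=3$, $I_1=\{1,2\}$, $I_2=\{2,3\}$, $f=x_1x_2+x_2^2x_3$, $g_1=x_2^3$, $g_2=-x_2^3$, $g_3=x_3$, and $S(g)=\{x\in\mathbb R^3: g_1(x)\ge0,g_2(x)\ge0,g_3(x)\ge0\}$ (so $f=0$ on $S(g)$). Let $\theta_1=1+x_1^2+x_2^2$, $\theta_2=1+x_2^2+x_3^2$, $\Theta_1=\theta_1(1+x_2^2)$, $\Theta_2=\theta_2(1+x_2^2)$. Then: (1) $f$ cannot be written as $\sigma_1+\psi_1g_1+\sigma_2+\sigma_3g_3$ with $\sigma_1\in\Sigma[x(I_1)]$, $\psi_1\in\mathbb R[x(I_1)]$, $\sigma_2,\sigma_3\in\Sigma[x(I_2)]$; (2) for every $\varepsilon>0$ there exist $k\in\mathbb N$, $\sigma_1\in\Sigma[x(I_1)]_{2k+2}$, $\psi_1\in\mathbb R[x(I_1)]_{4k+1}$, $\sigma_2\in\Sigma[x(I_2)]_{2k+2}$, $\sigma_3\in\Sigma[x(I_2)]_{4k+3}$ such that $$f+\varepsilon(\theta_1^2+\theta_2^2)=\frac{\sigma_1+\psi_1g_1}{\Theta_1^k}+\frac{\sigma_2+\sigma_3g_3}{\Theta_2^k}.$$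
   Context: For $T\subseteq\{1,\dots,n\}$, $x(T)=(x_i)_{i\in T}$; $\mathbb R[x(T)]$ is the ring of polynomials in $x(T)$ and $\mathbb R[x(T)]_t$ its elements of degree at most $t$; $\Sigma[x(T)]$ is the set of sums of squares of polynomials in $x(T)$ and $\Sigma[x(T)]_t$ the sums of squares of elements of $\mathbb R[x(T)]_t$. *)

(* Polynomials in x1,x2,x3 are
   represented by their polynomial functions R^3 -> R (over the infinite field R,
   polynomial identities and functional identities coincide). *)
From Stdlib Require Import Reals List.
Open Scope R_scope.

Definition pfun := R -> R -> R -> R.

Definition is_poly (T : nat -> Prop) (t : nat) (p : pfun) : Prop :=
  exists c : nat -> nat -> nat -> R,
    (forall a b e, c a b e <> 0 ->
        (a + b + e <= t)%nat /\ (a <> 0%nat -> T 1%nat) /\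
        (b <> 0%nat -> T 2%nat) /\ (e <> 0%nat -> T 3%nat)) /\
    (forall x1 x2 x3 : R, p x1 x2 x3 =
        sum_f_R0 (fun a => sum_f_R0 (fun b => sum_f_R0 (fun e =>
           c a b e * x1 ^ a * x2 ^ b * x3 ^ e) t) t) t).

Definition is_poly_any (T : nat -> Prop) (p : pfun) : Prop :=
  exists t, is_poly T t p.

Definition is_sos (T : nat -> Prop) (t : nat) (p : pfun) : Prop :=
  exists qs : list pfun, Forall (is_poly T t) qs /\
    forall x1 x2 x3 : R, p x1 x2 x3 =
      fold_right (fun q acc => (q x1 x2 x3) ^ 2 + acc) 0 qs.

Definition is_sos_any (T : nat -> Prop) (p : pfun) : Prop :=
  exists t, is_sos T t p.

Definition I1 (i : nat) : Prop := i = 1%nat \/ i = 2%nat.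
Definition I2 (i : nat) : Prop := i = 2%nat \/ i = 3%nat.

Definition f0 (x1 x2 x3 : R) : R := x1 * x2 + x2 ^ 2 * x3.
Definition g1 (x1 x2 x3 : R) : R := x2 ^ 3.
Definition g2 (x1 x2 x3 : R) : R := - x2 ^ 3.
Definition g3 (x1 x2 x3 : R) : R := x3.

Definition theta1 (x1 x2 x3 : R) : R := 1 + x1 ^ 2 + x2 ^ 2.
Definition theta2 (x1 x2 x3 : R) : R := 1 + x2 ^ 2 + x3 ^ 2.
Definition Theta1 (x1 x2 x3 : R) : R := theta1 x1 x2 x3 * (1 + x2 ^ 2).
Definition Theta2 (x1 x2 x3 : R) : R := theta2 x1 x2 x3 * (1 + x2 ^ 2).

(* (1): on the plane x3 = 0 a certificate reads x1 x2 = s1 + s2 + p1 x2^3 with s1, s2 >= 0.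
   At x1 = 1 and x2 = y < 0 this gives y >= p1 y^3, i.e. p1 y^2 >= 1, which fails for small |y|
   because p1 is bounded near the origin.

   (2): with v = 1 + x2^2 we have v^k = 1 + x2^2 Q_k and Q_k = k + x2^2 P_k for polynomials
   Q_k, P_k in x2.  Multiply x1 x2 + eps theta1^2 by Theta1^k = theta1^k v^k: the terms carrying
   x2^3 go to psi1 g1, and what remains is theta1^k (eps theta1^2 + x1 x2 + eps k x2^2 theta1^2),
   a sum of squares as soon as k >= 1/(16 eps^2).  The other half, x2^2 x3 + eps theta2^2 times
   Theta2^k, is already of the form sigma2 + sigma3 g3. *)

From Stdlib Require Import Reals List Lra Lia Psatz.
Import ListNotations.
Open Scope R_scope.

Definition sum3 (t : nat) (F : nat -> nat -> nat -> R) : R :=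
  sum_f_R0 (fun a => sum_f_R0 (fun b => sum_f_R0 (fun e => F a b e) t) t) t.

Lemma sum_f_R0_zero (F : nat -> R) t :
  (forall i, (i <= t)%nat -> F i = 0) -> sum_f_R0 F t = 0.
Proof.
  induction t as [|t IH]; intros HF; simpl.
  - apply HF; lia.
  - rewrite IH by (intros; apply HF; lia). rewrite HF by lia. ring.
Qed.

Lemma sum_f_R0_single (F : nat -> R) j t :
  (j <= t)%nat -> (forall i, i <> j -> F i = 0) -> sum_f_R0 F t = F j.
Proof.
  induction t as [|t IH]; intros Hj HF; simpl.
  - now replace j with 0%nat by lia.
  - destruct (Nat.eq_dec j (S t)) as [->|Hne].
    + rewrite sum_f_R0_zero by (intros; apply HF; lia). ring.
    + rewrite IH by (first [lia | exact HF]). rewrite (HF (S t)) by lia. ring.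
Qed.

Lemma sum_f_R0_seq (F : nat -> R) t :
  sum_f_R0 F t = fold_right (fun i acc => F i + acc) 0 (seq 0 (S t)).
Proof.
  induction t as [|t IH]; [simpl; ring|].
  assert (Hshift : forall a s, fold_right (fun i acc => F i + acc) a s
                              = fold_right (fun i acc => F i + acc) 0 s + a).
  { intros a s; induction s as [|i s IHs]; simpl; lra. }
  simpl sum_f_R0. rewrite IH, (seq_S (S t)), fold_right_app; cbn [fold_right Nat.add].
  rewrite (Hshift (F (S t) + 0)). ring.
Qed.

Lemma sum3_ext t (F G : nat -> nat -> nat -> R) :
  (forall a b e, F a b e = G a b e) -> sum3 t F = sum3 t G.
Proof.
  intros HFG. unfold sum3.
  apply sum_eq; intros; apply sum_eq; intros; apply sum_eq; intros. apply HFG.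
Qed.

Lemma sum3_plus t (F G : nat -> nat -> nat -> R) :
  sum3 t F + sum3 t G = sum3 t (fun a b e => F a b e + G a b e).
Proof.
  unfold sum3. rewrite <- sum_plus. apply sum_eq; intros.
  rewrite <- sum_plus. apply sum_eq; intros. now rewrite <- sum_plus.
Qed.

Lemma sum3_zero t (F : nat -> nat -> nat -> R) :
  (forall a b e, F a b e = 0) -> sum3 t F = 0.
Proof.
  intros HF. unfold sum3.
  apply sum_f_R0_zero; intros; apply sum_f_R0_zero; intros; apply sum_f_R0_zero; intros.
  apply HF.
Qed.

Lemma sum3_single t (F : nat -> nat -> nat -> R) a0 b0 e0 :
  (a0 <= t)%nat -> (b0 <= t)%nat -> (e0 <= t)%nat ->
  (forall a b e, a <> a0 \/ b <> b0 \/ e <> e0 -> F a b e = 0) ->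
  sum3 t F = F a0 b0 e0.
Proof.
  intros Ha Hb He HF. unfold sum3.
  rewrite (sum_f_R0_single _ a0) by
    (auto; intros; apply sum_f_R0_zero; intros; apply sum_f_R0_zero; intros; apply HF; auto).
  rewrite (sum_f_R0_single _ b0) by
    (auto; intros; apply sum_f_R0_zero; intros; apply HF; auto).
  apply sum_f_R0_single; auto.
Qed.

(* [(c, a, b, e)] stands for [c * x1^a * x2^b * x3^e].  As in [is_poly], the degree and
   variable constraints of [monomial_in] only bind monomials with a nonzero coefficient. *)
Definition monomial : Type := (R * nat * nat * nat)%type.

Definition eval_monomial (m : monomial) : pfun :=
  fun x1 x2 x3 => let '(c, a, b, e) := m in c * x1 ^ a * x2 ^ b * x3 ^ e.

Definition eval_monomials (l : list monomial) : pfun :=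
  fun x1 x2 x3 => fold_right (fun m acc => eval_monomial m x1 x2 x3 + acc) 0 l.

Definition monomial_in (T : nat -> Prop) (t : nat) (m : monomial) : Prop :=
  let '(c, a, b, e) := m in
  c <> 0 -> (a + b + e <= t)%nat /\ (a <> 0%nat -> T 1%nat) /\
            (b <> 0%nat -> T 2%nat) /\ (e <> 0%nat -> T 3%nat).

Definition monomial_mul (m m' : monomial) : monomial :=
  let '(c, a, b, e) := m in
  let '(c', a', b', e') := m' in (c * c', (a + a')%nat, (b + b')%nat, (e + e')%nat).

Definition monomials_mul (l l' : list monomial) : list monomial :=
  flat_map (fun m => map (monomial_mul m) l') l.

Lemma eval_monomials_app l l' x1 x2 x3 :
  eval_monomials (l ++ l') x1 x2 x3 = eval_monomials l x1 x2 x3 + eval_monomials l' x1 x2 x3.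
Proof.
  unfold eval_monomials. induction l as [|m l IH]; simpl; [ring | rewrite IH; ring].
Qed.

Lemma eval_monomials_flat_map {A} (g : A -> list monomial) (F : A -> R) s x1 x2 x3 :
  (forall y, eval_monomials (g y) x1 x2 x3 = F y) ->
  eval_monomials (flat_map g s) x1 x2 x3 = fold_right (fun y acc => F y + acc) 0 s.
Proof.
  intros HgF. induction s as [|y s IH]; simpl; [reflexivity|].
  now rewrite eval_monomials_app, IH, HgF.
Qed.

Lemma eval_monomials_mul l l' x1 x2 x3 :
  eval_monomials (monomials_mul l l') x1 x2 x3
  = eval_monomials l x1 x2 x3 * eval_monomials l' x1 x2 x3.
Proof.
  unfold monomials_mul.
  rewrite (eval_monomials_flat_map _
            (fun m => eval_monomial m x1 x2 x3 * eval_monomials l' x1 x2 x3)).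
  - induction l as [|m l IH]; simpl; [ring|]. rewrite IH. unfold eval_monomials; simpl; ring.
  - intros [[[c a] b] e]. induction l' as [|[[[c' a'] b'] e'] l' IH]; simpl; [ring|].
    unfold eval_monomials in *; simpl in *. rewrite IH, !pow_add. ring.
Qed.

Lemma monomial_in_le T t s m : (t <= s)%nat -> monomial_in T t m -> monomial_in T s m.
Proof. destruct m as [[[c a] b] e]; simpl; intros Hts Hm Hc; specialize (Hm Hc); intuition lia. Qed.

Lemma monomial_in_mul T t s m m' :
  monomial_in T t m -> monomial_in T s m' -> monomial_in T (t + s) (monomial_mul m m').
Proof.
  destruct m as [[[c a] b] e], m' as [[[c' a'] b'] e']; simpl.
  intros Hm Hm' Hcc.
  destruct (Hm ltac:(contradict Hcc; rewrite Hcc; ring)) as (Hd & Ha & Hb & He).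
  destruct (Hm' ltac:(contradict Hcc; rewrite Hcc; ring)) as (Hd' & Ha' & Hb' & He').
  repeat split; [lia | ..]; intros Hne.
  - destruct a; [apply Ha'; lia | apply Ha; lia].
  - destruct b; [apply Hb'; lia | apply Hb; lia].
  - destruct e; [apply He'; lia | apply He; lia].
Qed.


Section PolyClosure.

Variable T : nat -> Prop.

Lemma is_poly_ext t (p q : pfun) :
  (forall x1 x2 x3, p x1 x2 x3 = q x1 x2 x3) -> is_poly T t p -> is_poly T t q.
Proof.
  intros Hpq [c [Hc Hp]]. exists c. split; [exact Hc|].
  intros x1 x2 x3. rewrite <- Hpq. apply Hp.
Qed.

Lemma is_poly_zero t : is_poly T t (fun _ _ _ => 0).
Proof.
  exists (fun _ _ _ => 0). split; [intros a b e H; contradiction|].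
  intros x1 x2 x3. symmetry. apply sum3_zero. intros; ring.
Qed.

Lemma is_poly_add t p q :
  is_poly T t p -> is_poly T t q -> is_poly T t (fun x1 x2 x3 => p x1 x2 x3 + q x1 x2 x3).
Proof.
  intros [c [Hc Hp]] [d [Hd Hq]]. exists (fun a b e => c a b e + d a b e). split.
  - intros a b e Hcd. destruct (Req_dec (c a b e) 0) as [H0|H0]; [|now apply Hc].
    apply Hd. contradict Hcd. rewrite H0, Hcd. ring.
  - intros x1 x2 x3. rewrite Hp, Hq.
    fold (sum3 t (fun a b e => c a b e * x1 ^ a * x2 ^ b * x3 ^ e)).
    fold (sum3 t (fun a b e => d a b e * x1 ^ a * x2 ^ b * x3 ^ e)).
    rewrite sum3_plus. apply sum3_ext. intros; ring.
Qed.

Lemma is_poly_monomial t m : monomial_in T t m -> is_poly T t (eval_monomial m).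
Proof.
  destruct m as [[[c a0] b0] e0]. intros Hm.
  destruct (Req_dec c 0) as [->|Hc].
  { apply (is_poly_ext _ (fun _ _ _ => 0)); [intros; simpl; ring | apply is_poly_zero]. }
  set (hit a b e := (Nat.eqb a a0 && Nat.eqb b b0 && Nat.eqb e e0)%bool).
  assert (Hhit : forall a b e, hit a b e = true <-> a = a0 /\ b = b0 /\ e = e0).
  { intros. unfold hit. rewrite !Bool.andb_true_iff, !Nat.eqb_eq. tauto. }
  exists (fun a b e => if hit a b e then c else 0). split.
  - intros a b e. destruct (hit a b e) eqn:E; [|tauto].
    apply Hhit in E as (-> & -> & ->). auto.
  - intros x1 x2 x3. symmetry.
    change (sum3 t (fun a b e => (if hit a b e then c else 0) * x1 ^ a * x2 ^ b * x3 ^ e)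
            = c * x1 ^ a0 * x2 ^ b0 * x3 ^ e0).
    destruct (Hm Hc) as (Hdeg & _).
    rewrite (sum3_single _ _ a0 b0 e0); try lia.
    + destruct (Hhit a0 b0 e0) as [_ ->]; auto.
    + intros a b e Hne. destruct (hit a b e) eqn:E; [|ring].
      apply Hhit in E. lia.
Qed.

Lemma is_poly_eval_monomials t l :
  Forall (monomial_in T t) l -> is_poly T t (eval_monomials l).
Proof.
  induction 1 as [|m l Hm _ IH].
  - apply is_poly_zero.
  - apply (is_poly_add _ (eval_monomial m)); [apply is_poly_monomial|]; assumption.
Qed.

Lemma is_poly_as_monomials t p :
  is_poly T t p ->
  exists l, Forall (monomial_in T t) l /\ forall x1 x2 x3, p x1 x2 x3 = eval_monomials l x1 x2 x3.
Proof.
  intros [c [Hc Hp]].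
  exists (flat_map (fun a => flat_map (fun b => flat_map (fun e => [(c a b e, a, b, e)])
            (seq 0 (S t))) (seq 0 (S t))) (seq 0 (S t))).
  split.
  - apply Forall_forall. intros m Hm.
    apply in_flat_map in Hm as (a & _ & Hm). apply in_flat_map in Hm as (b & _ & Hm).
    apply in_flat_map in Hm as (e & _ & [<- | []]). exact (Hc a b e).
  - intros x1 x2 x3. rewrite Hp, sum_f_R0_seq. symmetry.
    apply eval_monomials_flat_map; intros a. rewrite sum_f_R0_seq.
    apply eval_monomials_flat_map; intros b. rewrite sum_f_R0_seq.
    apply eval_monomials_flat_map; intros e. unfold eval_monomials; simpl. ring.
Qed.

Lemma is_poly_le t s p : (t <= s)%nat -> is_poly T t p -> is_poly T s p.
Proof.
  intros Hts Hp. destruct (is_poly_as_monomials _ _ Hp) as (l & Hl & Hpl).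
  apply (is_poly_ext _ (eval_monomials l)); [intros; symmetry; apply Hpl|].
  apply is_poly_eval_monomials. eapply Forall_impl; [|exact Hl].
  intros m; apply monomial_in_le, Hts.
Qed.

Lemma is_poly_mul t s p q :
  is_poly T t p -> is_poly T s q -> is_poly T (t + s) (fun x1 x2 x3 => p x1 x2 x3 * q x1 x2 x3).
Proof.
  intros Hp Hq.
  destruct (is_poly_as_monomials _ _ Hp) as (l & Hl & Hpl),
           (is_poly_as_monomials _ _ Hq) as (l' & Hl' & Hql').
  apply (is_poly_ext _ (eval_monomials (monomials_mul l l'))).
  { intros. now rewrite eval_monomials_mul, Hpl, Hql'. }
  apply is_poly_eval_monomials. apply Forall_forall. intros m Hm.
  apply in_flat_map in Hm as (m1 & Hm1 & Hm). apply in_map_iff in Hm as (m2 & <- & Hm2).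
  apply monomial_in_mul; eapply Forall_forall; eauto.
Qed.

Lemma is_poly_const c : is_poly T 0 (fun _ _ _ => c).
Proof.
  apply (is_poly_ext _ (eval_monomial (c, 0%nat, 0%nat, 0%nat))); [intros; simpl; ring|].
  apply is_poly_monomial. simpl. intros _. repeat split; intros; lia.
Qed.

Lemma is_poly_x1 : T 1%nat -> is_poly T 1 (fun x1 _ _ => x1).
Proof.
  intros H1. apply (is_poly_ext _ (eval_monomial (1, 1%nat, 0%nat, 0%nat))); [intros; simpl; ring|].
  apply is_poly_monomial. simpl. intros _. repeat split; intros; auto; lia.
Qed.

Lemma is_poly_x2 : T 2%nat -> is_poly T 1 (fun _ x2 _ => x2).
Proof.
  intros H2. apply (is_poly_ext _ (eval_monomial (1, 0%nat, 1%nat, 0%nat))); [intros; simpl; ring|].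
  apply is_poly_monomial. simpl. intros _. repeat split; intros; auto; lia.
Qed.

Lemma is_poly_x3 : T 3%nat -> is_poly T 1 (fun _ _ x3 => x3).
Proof.
  intros H3. apply (is_poly_ext _ (eval_monomial (1, 0%nat, 0%nat, 1%nat))); [intros; simpl; ring|].
  apply is_poly_monomial. simpl. intros _. repeat split; intros; auto; lia.
Qed.

Lemma is_poly_add_max t s p q :
  is_poly T t p -> is_poly T s q ->
  is_poly T (Nat.max t s) (fun x1 x2 x3 => p x1 x2 x3 + q x1 x2 x3).
Proof.
  intros Hp Hq. apply is_poly_add; [apply (is_poly_le t) | apply (is_poly_le s)]; auto; lia.
Qed.

Lemma is_poly_opp t p : is_poly T t p -> is_poly T t (fun x1 x2 x3 => - p x1 x2 x3).
Proof.
  intros Hp. apply (is_poly_ext _ (fun x1 x2 x3 => -1 * p x1 x2 x3)); [intros; ring|].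
  exact (is_poly_mul 0 _ _ _ (is_poly_const _) Hp).
Qed.

Lemma is_poly_pow t n p : is_poly T t p -> is_poly T (n * t) (fun x1 x2 x3 => p x1 x2 x3 ^ n).
Proof.
  intros Hp. induction n as [|n IH]; [exact (is_poly_const 1)|].
  exact (is_poly_mul _ _ _ _ Hp IH).
Qed.

End PolyClosure.

(* [is_poly_exact] follows the syntax of the polynomial and computes a degree bound as an
   arithmetic expression; [solve_is_poly] then compares that bound with the target by [lia]. *)
Ltac is_poly_exact :=
  repeat first
    [ eassumption
    | eapply is_poly_const
    | eapply is_poly_x1 | eapply is_poly_x2 | eapply is_poly_x3
    | eapply is_poly_add_max | eapply is_poly_opp
    | eapply is_poly_mul | eapply is_poly_pow
    | cbv [I1 I2]; lia ].

Ltac solve_is_poly := eapply is_poly_le; [| is_poly_exact]; lia.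

Definition sum_sq (qs : list pfun) : pfun :=
  fun x1 x2 x3 => fold_right (fun q acc => q x1 x2 x3 ^ 2 + acc) 0 qs.

Lemma sum_sq_app qs qs' x1 x2 x3 :
  sum_sq (qs ++ qs') x1 x2 x3 = sum_sq qs x1 x2 x3 + sum_sq qs' x1 x2 x3.
Proof.
  unfold sum_sq. induction qs as [|q qs IH]; cbn [fold_right app]; [ring | rewrite IH; ring].
Qed.

Definition roots_mul (qs qs' : list pfun) : list pfun :=
  flat_map (fun q => map (fun q' x1 x2 x3 => q x1 x2 x3 * q' x1 x2 x3) qs') qs.

Lemma sum_sq_map_mul q qs x1 x2 x3 :
  sum_sq (map (fun q' x1 x2 x3 => q x1 x2 x3 * q' x1 x2 x3) qs) x1 x2 x3
  = q x1 x2 x3 ^ 2 * sum_sq qs x1 x2 x3.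
Proof.
  unfold sum_sq. induction qs as [|q' qs IH]; cbn [map fold_right]; [ring | rewrite IH; ring].
Qed.

Lemma sum_sq_roots_mul qs qs' x1 x2 x3 :
  sum_sq (roots_mul qs qs') x1 x2 x3 = sum_sq qs x1 x2 x3 * sum_sq qs' x1 x2 x3.
Proof.
  induction qs as [|q qs IH]; [unfold sum_sq; simpl; ring|].
  unfold roots_mul in *; cbn [flat_map].
  rewrite sum_sq_app, IH, sum_sq_map_mul. unfold sum_sq; cbn [fold_right]. ring.
Qed.

Section SosClosure.

Variable T : nat -> Prop.

Lemma is_sos_ext t (p q : pfun) :
  (forall x1 x2 x3, p x1 x2 x3 = q x1 x2 x3) -> is_sos T t p -> is_sos T t q.
Proof.
  intros Hpq [qs [Hqs Hp]]. exists qs. split; [exact Hqs|].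
  intros x1 x2 x3. rewrite <- Hpq. apply Hp.
Qed.

Lemma is_sos_nonneg t p x1 x2 x3 : is_sos T t p -> 0 <= p x1 x2 x3.
Proof.
  intros [qs [_ Hp]]. rewrite Hp. clear Hp.
  induction qs as [|q qs IH]; cbn [fold_right]; [lra|]. pose proof (pow2_ge_0 (q x1 x2 x3)). lra.
Qed.

Lemma is_sos_le t s p : (t <= s)%nat -> is_sos T t p -> is_sos T s p.
Proof.
  intros Hts [qs [Hqs Hp]]. exists qs. split; [|exact Hp].
  eapply Forall_impl; [|exact Hqs]. intros q; apply is_poly_le, Hts.
Qed.

Lemma is_sos_scale_sq t a q :
  0 <= a -> is_poly T t q -> is_sos T t (fun x1 x2 x3 => a * q x1 x2 x3 ^ 2).
Proof.
  intros Ha Hq. exists [fun x1 x2 x3 => sqrt a * q x1 x2 x3]. split.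
  - constructor; [|constructor]. exact (is_poly_mul _ 0 _ _ _ (is_poly_const _ _) Hq).
  - intros. cbn [fold_right]. rewrite Rpow_mult_distr, pow2_sqrt by exact Ha. ring.
Qed.

Lemma is_sos_sq t q : is_poly T t q -> is_sos T t (fun x1 x2 x3 => q x1 x2 x3 ^ 2).
Proof.
  intros Hq. apply (is_sos_ext _ (fun x1 x2 x3 => 1 * q x1 x2 x3 ^ 2)); [intros; ring|].
  apply is_sos_scale_sq; [lra | exact Hq].
Qed.

Lemma is_sos_const a : 0 <= a -> is_sos T 0 (fun _ _ _ => a).
Proof.
  intros Ha. apply (is_sos_ext _ (fun _ _ _ => a * 1 ^ 2)); [intros; ring|].
  apply is_sos_scale_sq; [exact Ha | apply is_poly_const].
Qed.

Lemma is_sos_add t p q : is_sos T t p -> is_sos T t q ->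
  is_sos T t (fun x1 x2 x3 => p x1 x2 x3 + q x1 x2 x3).
Proof.
  intros [qs [Hqs Hp]] [qs' [Hqs' Hq]]. exists (qs ++ qs'). split.
  - now apply Forall_app.
  - intros. rewrite Hp, Hq. symmetry. apply sum_sq_app.
Qed.

Lemma is_sos_mul t s p q : is_sos T t p -> is_sos T s q ->
  is_sos T (t + s) (fun x1 x2 x3 => p x1 x2 x3 * q x1 x2 x3).
Proof.
  intros [qs [Hqs Hp]] [qs' [Hqs' Hq]]. exists (roots_mul qs qs'). split.
  - apply Forall_forall. intros r Hr.
    apply in_flat_map in Hr as (q1 & Hq1 & Hr). apply in_map_iff in Hr as (q2 & <- & Hq2).
    apply is_poly_mul; eapply Forall_forall; eauto.
  - intros. rewrite Hp, Hq. symmetry. apply sum_sq_roots_mul.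
Qed.

Lemma is_sos_pow t n p : is_sos T t p -> is_sos T (n * t) (fun x1 x2 x3 => p x1 x2 x3 ^ n).
Proof.
  intros Hp. induction n as [|n IH].
  - exact (is_sos_const 1 ltac:(lra)).
  - exact (is_sos_mul _ _ _ _ Hp IH).
Qed.

End SosClosure.

(** * The obstruction *)

Lemma is_poly_bounded T t p :
  is_poly T t p ->
  exists M, 0 <= M /\ forall x1 x2 x3, Rabs x1 <= 1 -> Rabs x2 <= 1 -> Rabs x3 <= 1 ->
    Rabs (p x1 x2 x3) <= M.
Proof.
  intros Hp. destruct (is_poly_as_monomials _ _ _ Hp) as (l & _ & Hpl).
  exists (fold_right (fun (m : monomial) acc => let '(c, _, _, _) := m in Rabs c + acc) 0 l).
  split.
  - clear Hpl. induction l as [|m l IH]; cbn [fold_right]; [lra|].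
    destruct m as [[[c a] b] e]. pose proof (Rabs_pos c). lra.
  - intros x1 x2 x3 H1 H2 H3. rewrite Hpl. unfold eval_monomials. clear Hpl.
    assert (Hpow : forall x n, Rabs x <= 1 -> 0 <= Rabs x ^ n <= 1).
    { intros x n Hx. split; [apply pow_le, Rabs_pos|].
      rewrite <- (pow1 n). apply pow_incr. split; [apply Rabs_pos | exact Hx]. }
    induction l as [|m l IH]; cbn [fold_right]; [rewrite Rabs_R0; lra|].
    destruct m as [[[c a] b] e].
    eapply Rle_trans; [apply Rabs_triang|]. apply Rplus_le_compat; [|exact IH].
    unfold eval_monomial. rewrite !Rabs_mult, <- !RPow_abs.
    pose proof (Hpow x1 a H1). pose proof (Hpow x2 b H2). pose proof (Hpow x3 e H3).
    pose proof (Rabs_pos c).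
    assert (Rabs c * Rabs x1 ^ a <= Rabs c) by nra.
    assert (Rabs c * Rabs x1 ^ a * Rabs x2 ^ b <= Rabs c) by nra.
    nra.
Qed.

Lemma f0_notin_sparse_quadratic_module :
  ~ exists s1 p1 s2 s3 : pfun,
       is_sos_any I1 s1 /\ is_poly_any I1 p1 /\
       is_sos_any I2 s2 /\ is_sos_any I2 s3 /\
       forall x1 x2 x3 : R,
         f0 x1 x2 x3 = s1 x1 x2 x3 + p1 x1 x2 x3 * g1 x1 x2 x3
                      + s2 x1 x2 x3 + s3 x1 x2 x3 * g3 x1 x2 x3.
Proof.
  intros (s1 & p1 & s2 & s3 & [t1 Hs1] & [tp Hp1] & [t2 Hs2] & _ & Hf).
  destruct (is_poly_bounded _ _ _ Hp1) as (M & HM & Hbound).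
  set (y := - / (M + 1)).
  assert (Hy : y * (M + 1) = -1) by (unfold y; field; lra).
  assert (Hyneg : y < 0) by (unfold y; apply Ropp_lt_gt_0_contravar, Rinv_0_lt_compat; lra).
  assert (Hyge : -1 <= y) by nra.
  specialize (Hf 1 y 0). unfold f0, g1, g3 in Hf.
  pose proof (is_sos_nonneg _ _ _ 1 y 0 Hs1). pose proof (is_sos_nonneg _ _ _ 1 y 0 Hs2).
  assert (Hp : Rabs (p1 1 y 0) <= M).
  { apply Hbound; rewrite ?Rabs_R1, ?Rabs_R0; try lra. apply Rabs_le; lra. }
  pose proof (Rle_abs (p1 1 y 0)). pose proof (Rle_abs (- p1 1 y 0)). rewrite Rabs_Ropp in *.
  set (P := p1 1 y 0) in *. clearbody P y.
  assert (Hcube : P * y ^ 3 <= y) by lra.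
  assert (Hge1 : 1 <= P * y ^ 2) by nra.
  assert (Hlt1 : P * y ^ 2 < 1).
  { assert (HMy : M * y ^ 2 * (M + 1) ^ 2 = M).
    { replace (M * y ^ 2 * (M + 1) ^ 2) with (M * (y * (M + 1)) ^ 2) by ring.
      rewrite Hy. ring. }
    nra. }
  lra.
Qed.

(** * The certificate *)

Fixpoint geom_sum (k : nat) (u : R) : R :=
  match k with O => 0 | S j => geom_sum j u + (1 + u) ^ j end.

Fixpoint geom_sum2 (k : nat) (u : R) : R :=
  match k with O => 0 | S j => geom_sum2 j u + geom_sum j u end.

Lemma pow_1plus_geom_sum k u : (1 + u) ^ k = 1 + u * geom_sum k u.
Proof. induction k as [|k IH]; cbn [pow geom_sum]; [ring | rewrite IH; ring]. Qed.

Lemma geom_sum_geom_sum2 k u : geom_sum k u = INR k + u * geom_sum2 k u.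
Proof.
  induction k as [|k IH]; cbn [geom_sum geom_sum2]; [simpl; ring|].
  rewrite S_INR, pow_1plus_geom_sum, IH. ring.
Qed.

Lemma is_poly_geom_sum T k :
  T 2%nat -> is_poly T (2 * k - 2) (fun _ x2 _ => geom_sum k (x2 ^ 2)).
Proof.
  intros H2. induction k as [|k IH]; cbn [geom_sum]; [apply is_poly_const|].
  solve_is_poly.
Qed.

Lemma is_poly_geom_sum2 T k :
  T 2%nat -> is_poly T (2 * k - 4) (fun _ x2 _ => geom_sum2 k (x2 ^ 2)).
Proof.
  intros H2. induction k as [|k IH]; cbn [geom_sum2]; [apply is_poly_const|].
  pose proof (is_poly_geom_sum T k H2). solve_is_poly.
Qed.

Definition sigma1_core (eps K : R) : pfun :=
  fun x1 x2 x3 => eps * theta1 x1 x2 x3 ^ 2 + x1 * x2 + eps * K * x2 ^ 2 * theta1 x1 x2 x3 ^ 2.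

Definition sigma1 (eps : R) (k : nat) : pfun :=
  fun x1 x2 x3 => theta1 x1 x2 x3 ^ k * sigma1_core eps (INR k) x1 x2 x3.

Definition psi1 (eps : R) (k : nat) : pfun :=
  fun x1 x2 x3 => theta1 x1 x2 x3 ^ k *
    (x1 * geom_sum k (x2 ^ 2) + eps * theta1 x1 x2 x3 ^ 2 * x2 * geom_sum2 k (x2 ^ 2)).

Definition sigma2 (eps : R) (k : nat) : pfun :=
  fun x1 x2 x3 => eps * (theta2 x1 x2 x3 ^ (k + 2) * (1 + x2 ^ 2) ^ k).

Definition sigma3 (k : nat) : pfun :=
  fun x1 x2 x3 => x2 ^ 2 * (theta2 x1 x2 x3 ^ k * (1 + x2 ^ 2) ^ k).

Lemma is_sos_theta1 : is_sos I1 1 theta1.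
Proof.
  apply (is_sos_ext _ _ (fun x1 x2 _ => 1 ^ 2 + x1 ^ 2 + x2 ^ 2)); [intros; unfold theta1; ring|].
  repeat apply is_sos_add; apply is_sos_sq; solve_is_poly.
Qed.

Lemma is_sos_theta2 : is_sos I2 1 theta2.
Proof.
  apply (is_sos_ext _ _ (fun _ x2 x3 => 1 ^ 2 + x2 ^ 2 + x3 ^ 2)); [intros; unfold theta2; ring|].
  repeat apply is_sos_add; apply is_sos_sq; solve_is_poly.
Qed.

Lemma is_sos_1_plus_x2_sq : is_sos I2 1 (fun _ x2 _ => 1 + x2 ^ 2).
Proof.
  apply (is_sos_ext _ _ (fun _ x2 _ => 1 ^ 2 + x2 ^ 2)); [intros; ring|].
  apply is_sos_add; apply is_sos_sq; solve_is_poly.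
Qed.

Lemma is_sos_sigma1_core eps K :
  0 < eps -> / (16 * eps) <= eps * K -> is_sos I1 3 (sigma1_core eps K).
Proof.
  intros Heps HK. pose proof (Rinv_0_lt_compat (16 * eps) ltac:(lra)).
  (* Complete the square: with u = x1^2 + x2^2, eps (1 + u)^2 + x1 x2 equals
     eps (1 - u)^2 + eps (2 x1 + x2 / (4 eps))^2 + (4 eps - 1/(16 eps)) x2^2. *)
  set (c := 4 * eps + eps * K - / (16 * eps)).
  apply (is_sos_ext _ _ (fun x1 x2 _ =>
    eps * (1 - x1 ^ 2 - x2 ^ 2) ^ 2 + eps * (2 * x1 + / (4 * eps) * x2) ^ 2 + c * x2 ^ 2
    + 2 * eps * K * (x1 * x2) ^ 2 + 2 * eps * K * (x2 ^ 2) ^ 2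
    + eps * K * (x1 ^ 2 * x2 + x2 ^ 3) ^ 2)).
  { intros. unfold sigma1_core, theta1, c. field. lra. }
  repeat apply is_sos_add; apply is_sos_scale_sq; first [unfold c; lra | solve_is_poly].
Qed.

Lemma is_sos_sigma1 eps k :
  0 < eps -> / (16 * eps) <= eps * INR k -> (1 <= k)%nat -> is_sos I1 (2 * k + 2) (sigma1 eps k).
Proof.
  intros Heps HK Hk. apply (is_sos_le _ (k * 1 + 3)); [lia|].
  apply is_sos_mul; [apply is_sos_pow, is_sos_theta1 | apply is_sos_sigma1_core; assumption].
Qed.

Lemma is_poly_psi1 eps k : (2 <= k)%nat -> is_poly I1 (4 * k + 1) (psi1 eps k).
Proof.
  intros Hk. pose proof (is_poly_geom_sum I1 k (or_intror eq_refl)).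
  pose proof (is_poly_geom_sum2 I1 k (or_intror eq_refl)).
  assert (Htheta : is_poly I1 2 theta1) by (unfold theta1; solve_is_poly).
  unfold psi1. solve_is_poly.
Qed.

Lemma is_sos_sigma2 eps k : 0 <= eps -> is_sos I2 (2 * k + 2) (sigma2 eps k).
Proof.
  intros Heps. apply (is_sos_le _ (0 + ((k + 2) * 1 + k * 1))); [lia|].
  apply is_sos_mul; [now apply is_sos_const|].
  apply is_sos_mul; apply is_sos_pow; [apply is_sos_theta2 | apply is_sos_1_plus_x2_sq].
Qed.

Lemma is_sos_sigma3 k : is_sos I2 (4 * k + 3) (sigma3 k).
Proof.
  apply (is_sos_le _ (1 + (k * 1 + k * 1))); [lia|].
  apply is_sos_mul; [apply is_sos_sq; solve_is_poly|].
  apply is_sos_mul; apply is_sos_pow; [apply is_sos_theta2 | apply is_sos_1_plus_x2_sq].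
Qed.

Lemma sigma1_psi1_eq eps k x1 x2 x3 :
  sigma1 eps k x1 x2 x3 + psi1 eps k x1 x2 x3 * g1 x1 x2 x3
  = (x1 * x2 + eps * theta1 x1 x2 x3 ^ 2) * Theta1 x1 x2 x3 ^ k.
Proof.
  unfold sigma1, sigma1_core, psi1, g1, Theta1.
  rewrite Rpow_mult_distr, pow_1plus_geom_sum, geom_sum_geom_sum2. ring.
Qed.

Lemma sigma2_sigma3_eq eps k x1 x2 x3 :
  sigma2 eps k x1 x2 x3 + sigma3 k x1 x2 x3 * g3 x1 x2 x3
  = (x2 ^ 2 * x3 + eps * theta2 x1 x2 x3 ^ 2) * Theta2 x1 x2 x3 ^ k.
Proof. unfold sigma2, sigma3, g3, Theta2. rewrite Rpow_mult_distr, pow_add. ring. Qed.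

Theorem mainTheorem11 :
  (~ exists s1 p1 s2 s3 : pfun,
       is_sos_any I1 s1 /\ is_poly_any I1 p1 /\
       is_sos_any I2 s2 /\ is_sos_any I2 s3 /\
       forall x1 x2 x3 : R,
         f0 x1 x2 x3 = s1 x1 x2 x3 + p1 x1 x2 x3 * g1 x1 x2 x3
                      + s2 x1 x2 x3 + s3 x1 x2 x3 * g3 x1 x2 x3)
  /\
  (forall eps : R, 0 < eps ->
     exists (k : nat) (s1 p1 s2 s3 : pfun),
       is_sos I1 (2 * k + 2) s1 /\ is_poly I1 (4 * k + 1) p1 /\
       is_sos I2 (2 * k + 2) s2 /\ is_sos I2 (4 * k + 3) s3 /\
       forall x1 x2 x3 : R,
         f0 x1 x2 x3 + eps * (theta1 x1 x2 x3 ^ 2 + theta2 x1 x2 x3 ^ 2) =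
           (s1 x1 x2 x3 + p1 x1 x2 x3 * g1 x1 x2 x3) / (Theta1 x1 x2 x3 ^ k)
         + (s2 x1 x2 x3 + s3 x1 x2 x3 * g3 x1 x2 x3) / (Theta2 x1 x2 x3 ^ k)).
Proof.
  split; [exact f0_notin_sparse_quadratic_module|].
  intros eps Heps.
  destruct (INR_unbounded (/ (16 * eps ^ 2))) as [n Hn].
  set (k := (n + 2)%nat).
  assert (Hk : / (16 * eps) <= eps * INR k).
  { assert (eps * / (16 * eps ^ 2) = / (16 * eps)) by (field; lra).
    unfold k. rewrite plus_INR. pose proof (pos_INR 2). nra. }
  exists k, (sigma1 eps k), (psi1 eps k), (sigma2 eps k), (sigma3 k).
  split; [|split; [|split; [|split]]].
  - apply is_sos_sigma1; [exact Heps | exact Hk | unfold k; lia].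
  - apply is_poly_psi1. unfold k; lia.
  - apply is_sos_sigma2. lra.
  - apply is_sos_sigma3.
  - intros x1 x2 x3. rewrite sigma1_psi1_eq, sigma2_sigma3_eq.
    assert (0 < Theta1 x1 x2 x3) by (unfold Theta1, theta1; nra).
    assert (0 < Theta2 x1 x2 x3) by (unfold Theta2, theta2; nra).
    unfold f0. field. split; apply pow_nonzero; lra.
Qed.
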